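(* Let $p,p'\ge1$ with $|p-p'|=1$ and let $X=\alpha_{(p,p')}(Y)$ where $Y=y_1y_2\cdots$ is a Sturmian word in which $bb$ does not occur. An occurrence of the letter $b$ in $X$ (as a palindrome center) is original if and only if it is the first letter $b$ of $\alpha(y_jy_{j+1})$ (i.e. the last letter of $\alpha(y_j)$) for some $j$ with $y_j\neq y_{j+1}$.
   Context: $\alpha_{(p,p')}$ is the morphism $a\mapsto a^pb$, $b\mapsto a^{p'}b$. A Sturmian word is a right-infinite aperiodic word over $\{a,b\}$ with exactly $n+1$ factors of each length $n$. A center occurrence in a word is an occurrence of one of the factors $a$, $b$, $aa$. Write $X=\alpha(y_1)\alpha(y_2)\cdots$, with $\alpha(y_j)$ occupying positions $s_j+1,\dots,s_j+|\alpha(y_j)|$, $s_j=\sum_{t<j}|\alpha(y_t)|$. Reflections: the reflection of an occurrence $y_j=a$ (resp. $b$) is the center (middle letter if odd length, middle two letters if even length) of the run $a^p$ (resp. $a^{p'}$) at positions $s_j+1,\dots,s_j+p$ (resp. $s_j+p'$); the reflection of an occurrence $y_jy_{j+1}=aa$ is the letter $b$ at position $s_j+p+1$. A center occurrence of $X$ is original if it is not the reflection of any center occurrence of $Y$. *)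

(* Words are 0-indexed: W : nat -> letter, W i = letter at position i. *)
From HB Require Import structures.
From mathcomp Require Import all_boot.
Set Implicit Arguments. Unset Strict Implicit. Unset Printing Implicit Defensive.

Inductive letter := a | b.

Definition eqletter (x y : letter) : bool :=
  match x, y with a, a | b, b => true | _, _ => false end.
Lemma eqletterP : Equality.axiom eqletter.
Proof. by case; case; constructor. Qed.
HB.instance Definition _ := hasDecEq.Build letter eqletterP.

Definition word := nat -> letter.

Definition factor (W : word) (i n : nat) : seq letter := mkseq (fun k => W (i + k)) n.

Definition aperiodic (W : word) : Prop :=
  ~ (exists N P, 0 < P /\ forall i, N <= i -> W (i + P) = W i).

Definition sturmian (W : word) : Prop :=
  aperiodic W /\
  forall n, exists l : seq (seq letter),
    uniq l /\ size l = n.+1 /\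
    forall w, (w \in l) <-> (exists i, w = factor W i n).

Definition alpha (p p' : nat) (x : letter) : seq letter :=
  match x with a => rcons (nseq p a) b | b => rcons (nseq p' a) b end.

(* s_j = sum_{t<j} |alpha(y_t)|; alpha(y_j) occupies (0-indexed) positions
   s_j, ..., s_j + |alpha(y_j)| - 1 of X *)
Definition spos (p p' : nat) (Y : word) (j : nat) : nat :=
  \sum_(t < j) size (alpha p p' (Y t)).

Definition is_image (p p' : nat) (Y X : word) : Prop :=
  forall j k, k < size (alpha p p' (Y j)) ->
    X (spos p p' Y j + k) = nth a (alpha p p' (Y j)) k.

Definition center_occ (W : word) (i n : nat) : Prop :=
  factor W i n = [:: a] \/ factor W i n = [:: b] \/ factor W i n = [:: a; a].

(* center of the run at positions st, ..., st+L-1: the middle letter if L odd,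
   the middle two letters if L even; returned as (start, length) *)
Definition run_center (st L : nat) : nat * nat :=
  (st + (L.-1)./2, if odd L then 1 else 2).

Definition reflects (p p' : nat) (Y : word) (j n i m : nat) : Prop :=
  (factor Y j n = [:: a] /\ (i, m) = run_center (spos p p' Y j) p) \/
  (factor Y j n = [:: b] /\ (i, m) = run_center (spos p p' Y j) p') \/
  (factor Y j n = [:: a; a] /\ i = spos p p' Y j + p /\ m = 1).

Definition original (p p' : nat) (Y X : word) (i m : nat) : Prop :=
  center_occ X i m /\
  ~ (exists j n, center_occ Y j n /\ reflects p p' Y j n i m).

From mathcomp Require Import all_boot zify.

Set Implicit Arguments.
Unset Strict Implicit.

(* In [X = alpha(Y)] every letter [b] of [X] closes a block [alpha(y_j)], while
   the reflection of a center [a] or [b] of [Y] is the middle of a run of [a]'s.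
   Hence the only reflections landing on a [b] are those of factors [aa], and
   the reflection of [y_j y_(j+1) = aa] is the last letter of [alpha(y_j)]. So
   the last letter of [alpha(y_j)] is original exactly when [y_j y_(j+1)] is
   not [aa], i.e. (as [bb] does not occur) when [y_j <> y_(j+1)]. *)

Lemma size_alpha p p' x : size (alpha p p' x) = (if x is a then p else p').+1.
Proof. by case: x; rewrite /= size_rcons size_nseq. Qed.

Lemma nth_alpha p p' x k : k < size (alpha p p' x) ->
  nth a (alpha p p' x) k = if k == (size (alpha p p' x)).-1 then b else a.
Proof.
rewrite size_alpha ltnS; case: x => /= k_le.
- by rewrite nth_rcons size_nseq nth_nseq; case: ltngtP k_le => // /ltn_geF ->.
- by rewrite nth_rcons size_nseq nth_nseq; case: ltngtP k_le => // /ltn_geF ->.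
Qed.

Lemma half_pred_lt q : 0 < q -> (q.-1)./2 < q.
Proof. by move=> q_gt0; rewrite ltn_half_double -muln2; lia. Qed.

Lemma factor_singleton (W : word) i n x : factor W i n = [:: x] -> W i = x.
Proof. by case: n => [|[|]] // [<-]; rewrite addn0. Qed.

Lemma factor_pair (W : word) i n x y :
  factor W i n = [:: x; y] -> W i = x /\ W i.+1 = y.
Proof. by case: n => [|[|[|]]] // [<- <-]; rewrite addn0 addn1. Qed.

Section Positions.

Variables (p p' : nat) (Y : word).

Local Notation spos := (spos p p' Y).

Definition last_pos j := spos j + (size (alpha p p' (Y j))).-1.

Lemma spos0 : spos 0 = 0.
Proof. by rewrite /spos big_ord0. Qed.

Lemma sposS j : spos j.+1 = spos j + size (alpha p p' (Y j)).
Proof. by rewrite /spos big_ord_recr. Qed.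

Lemma last_posE j : last_pos j = (spos j.+1).-1.
Proof. by rewrite /last_pos sposS size_alpha addnS. Qed.

Lemma spos_increasing : {homo spos : j k / j < k}.
Proof.
have step j : spos j < spos j.+1 by rewrite sposS size_alpha addnS ltnS leq_addr.
exact: homo_ltn ltn_trans step.
Qed.

Lemma spos_inj : injective spos.
Proof.
move=> j k eq_jk; case: (ltngtP j k) => // /spos_increasing; by rewrite eq_jk ltnn.
Qed.

Lemma last_pos_inj : injective last_pos.
Proof.
have spos_gt0 j : 0 < spos j.+1 by rewrite -spos0 spos_increasing.
move=> j k; rewrite !last_posE => /(congr1 succn).
by rewrite !prednK // => /spos_inj/succn_inj.
Qed.

Lemma spos_block i : exists j, spos j <= i < spos j.+1.
Proof.
elim: i => [|i [j /andP [le_ji lt_ij]]].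
  by exists 0; rewrite sposS spos0 size_alpha.
case: (ltngtP i.+1 (spos j.+1)) => [lt_ij'|gt_ij|eq_ij].
- by exists j; rewrite lt_ij' ltnW.
- by rewrite ltnNge lt_ij in gt_ij.
- by exists j.+1; rewrite eq_ij leqnn (sposS j.+1) size_alpha addnS ltnS leq_addr.
Qed.

Variable X : word.
Hypothesis imYX : is_image p p' Y X.

Lemma image_letter j k : k < size (alpha p p' (Y j)) ->
  X (spos j + k) = if k == (size (alpha p p' (Y j))).-1 then b else a.
Proof. by move=> lt_k; rewrite imYX // nth_alpha. Qed.

Lemma last_pos_letter j : X (last_pos j) = b.
Proof. by rewrite /last_pos image_letter ?eqxx // size_alpha. Qed.

Lemma run_letter j k : k < (if Y j is a then p else p') -> X (spos j + k) = a.
Proof.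
move=> lt_k; rewrite image_letter size_alpha /= ?ltn_eqF //.
exact: ltnW.
Qed.

Lemma b_at_last_pos i : X i = b -> exists j, i = last_pos j.
Proof.
have [j /andP [le_ji lt_ij]] := spos_block i.
have lt_k : i - spos j < size (alpha p p' (Y j)) by rewrite ltn_subLR // -sposS.
have := image_letter lt_k; rewrite subnKC //; case: eqP => [eq_k _ _ | _ -> //].
by exists j; rewrite /last_pos -eq_k subnKC.
Qed.

Lemma last_pos_aa j : Y j = a -> last_pos j = spos j + p.
Proof. by move=> Yj; rewrite /last_pos size_alpha Yj. Qed.

Lemma aa_reflects_onto_last_pos j : Y j = a -> Y j.+1 = a ->
  center_occ Y j 2 /\ reflects p p' Y j 2 (last_pos j) 1.
Proof.
move=> Yj Yj1; have aa : factor Y j 2 = [:: a; a].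
  by rewrite /factor /mkseq /= addn0 addn1 Yj Yj1.
by split; [right; right | right; right; rewrite last_pos_aa].
Qed.

Lemma reflects_onto_last_pos (p_gt0 : 0 < p) (p'_gt0 : 0 < p') j n k :
  reflects p p' Y j n (last_pos k) 1 -> Y k = a /\ Y k.+1 = a.
Proof.
have not_run_center :
    (last_pos k, 1) <> run_center (spos j) (if Y j is a then p else p').
  move=> [eq_pos _]; have := last_pos_letter k.
  by rewrite eq_pos run_letter //; case: (Y j); apply: half_pred_lt.
case=> [[/factor_singleton Yj eq_c] | [[/factor_singleton Yj eq_c] |
         [/factor_pair [Yj Yj1] [eq_pos _]]]].
- by case: not_run_center; rewrite Yj.
- by case: not_run_center; rewrite Yj.
- by move: eq_pos; rewrite -last_pos_aa // => /last_pos_inj ->.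
Qed.

End Positions.

Theorem corollary1 (p p' : nat) (Y X : word) :
  1 <= p -> 1 <= p' -> (p = p'.+1 \/ p' = p.+1) ->
  sturmian Y ->
  (forall j, ~ (Y j = b /\ Y j.+1 = b)) ->
  is_image p p' Y X ->
  forall i, X i = b ->
    (original p p' Y X i 1 <->
     exists j, i = spos p p' Y j + (size (alpha p p' (Y j))).-1 /\ Y j <> Y j.+1).
Proof.
move=> p_gt0 p'_gt0 _ _ no_bb imYX i Xi; split.
- case=> _; have [j ->] := b_at_last_pos imYX Xi => not_reflection.
  exists j; split=> // eq_Y; apply: not_reflection; exists j, 2.
  have Yj : Y j = a.
    by case Yj_b: (Y j) eq_Y => // eq_Y; case: (no_bb j); rewrite -eq_Y.
  by apply: aa_reflects_onto_last_pos; rewrite -?eq_Y.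
- case=> j [eq_i neq_Y]; split.
    by right; left; rewrite /factor /mkseq /= addn0 Xi.
  rewrite eq_i => -[j' [n [_ /(reflects_onto_last_pos imYX p_gt0 p'_gt0) [Yj Yj1]]]].
  by apply: neq_Y; rewrite Yj Yj1.
Qed.
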